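(* Consider repetition-redundancy (Chase-combining) HARQ as described in the context, and let $k\ge 2$. Then the decoding-error events $\mathsf{ERR}_1,\ldots,\mathsf{ERR}_k$ are not independent in general: there exist SNR values $\gamma_1,\ldots,\gamma_k\ge 0$ for which $\Pr\{\mathsf{ERR}_{k-1},\mathsf{ERR}_k\}\neq\Pr\{\mathsf{ERR}_{k-1}\}\Pr\{\mathsf{ERR}_k\}$.
   Context: A message $\mathsf{m}\in\{0,1\}^{N_b}$ is encoded into a codeword $\mathbf{x}=\mathrm{ENC}[\mathsf{m}]\in\mathcal{X}^{N_s}$, $\mathcal{X}$ a complex constellation. In round $l$ the receiver observes $\mathbf{y}_l=\sqrt{\gamma_l}\,\mathbf{x}+\mathbf{z}_l$, where $\gamma_l\ge 0$ is the SNR of round $l$ and $\mathbf{z}_l$ are independent zero-mean unit-variance Gaussian noise vectors. With accumulated SNR $\gamma_{[k]}=\sum_{l=1}^k\gamma_l$ (assumed positive), the receiver forms the maximum-ratio-combined signal $\mathbf{y}_{[k]}=\frac{1}{\sqrt{\gamma_{[k]}}}\sum_{l=1}^k\sqrt{\gamma_l}\,\mathbf{y}_l=\sqrt{\gamma_{[k]}}\mathbf{x}+\mathbf{z}_{[k]}$ and decodes $\hat{\mathsf{m}}_k=\mathrm{DEC}[\mathbf{y}_{[k]}]$ with a fixed (deterministic) decoder $\mathrm{DEC}$. The decoding error after round $k$ is $\mathsf{ERR}_k=\{\hat{\mathsf{m}}_k\neq\mathsf{m}\}$, and $\Pr\{\mathsf{ERR}_k\}=\mathrm{PER}(\gamma_{[k]})$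 for a function $\mathrm{PER}$ (packet error rate). It is assumed that $0<\mathrm{PER}(\gamma)<1$ for some $\gamma>0$. *)

From HB Require Import structures.
From mathcomp Require Import all_boot all_order all_algebra.
From mathcomp Require Import all_classical all_reals all_analysis.
From mathcomp Require Import normal_distribution.
From mathcomp Require Import complex.
Set Implicit Arguments. Unset Strict Implicit. Unset Printing Implicit Defensive.
Import Order.TTheory GRing.Theory Num.Theory.
Local Open Scope classical_set_scope.
Local Open Scope ring_scope.
Local Open Scope complex_scope.

Section HARQ.
Context {R : realType} {d : measure_display} {T : measurableType d}.
Context (Nb Ns : nat).

Definition msg := (Nb.-tuple bool).

Definition acc_snr (gamma : nat -> R) (j : nat) : R :=
  \sum_(1 <= l < j.+1) gamma l.

Definition rx_signal (ENC : msg -> 'I_Ns -> R[i]) (m : T -> msg)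
  (z : nat -> T -> 'I_Ns -> R[i]) (gamma : nat -> R) (l : nat) (t : T)
  : 'I_Ns -> R[i] :=
  fun i => (Num.sqrt (gamma l))%:C * ENC (m t) i + z l t i.

Definition mrc_signal (ENC : msg -> 'I_Ns -> R[i]) (m : T -> msg)
  (z : nat -> T -> 'I_Ns -> R[i]) (gamma : nat -> R) (j : nat) (t : T)
  : 'I_Ns -> R[i] :=
  fun i => ((Num.sqrt (acc_snr gamma j))^-1)%:C *
    \sum_(1 <= l < j.+1) (Num.sqrt (gamma l))%:C * rx_signal ENC m z gamma l t i.

Definition err_event (ENC : msg -> 'I_Ns -> R[i]) (DEC : ('I_Ns -> R[i]) -> msg)
  (m : T -> msg) (z : nat -> T -> 'I_Ns -> R[i]) (gamma : nat -> R) (j : nat)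
  : set T :=
  [set t | DEC (mrc_signal ENC m z gamma j t) != m t].

(* Noise model for rounds 1..k: each z_l is a vector of i.i.d. circularly-
   symmetric complex Gaussian entries with zero mean and unit variance
   (real and imaginary parts i.i.d. N(0,1/2)); the real/imaginary parts of all
   entries of all z_1..z_k are mutually independent and independent of the
   message m (which is a measurable random variable). *)
Definition noise_comp (k : nat) (z : nat -> T -> 'I_Ns -> R[i])
  (c : 'I_k * 'I_Ns * bool) : T -> R :=
  fun t => let: (l, i, b) := c in
    if b then complex.Re (z (l.+1)%N t i) else complex.Im (z (l.+1)%N t i).

Definition noise_model (P : probability T R) (k : nat) (m : T -> msg)
  (z : nat -> T -> 'I_Ns -> R[i]) : Prop :=
  [/\ (forall A : set msg, measurable (m @^-1` A)),
      (forall c : 'I_k * 'I_Ns * bool, measurable_fun setT (noise_comp z c)),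
      (forall (c : 'I_k * 'I_Ns * bool) (B : set R), measurable B ->
         P (noise_comp z c @^-1` B) = normal_prob 0 (Num.sqrt (2^-1)) B) &
      (forall (A : set msg) (B : 'I_k * 'I_Ns * bool -> set R),
         (forall c, measurable (B c)) ->
         P (m @^-1` A `&` \bigcap_(c in [set: 'I_k * 'I_Ns * bool])
                              (noise_comp z c @^-1` B c))
         = (P (m @^-1` A) * \prod_(c : 'I_k * 'I_Ns * bool)
                              P (noise_comp z c @^-1` B c))%E)].
End HARQ.

From HB Require Import structures.
From mathcomp Require Import all_boot all_order all_algebra.
From mathcomp Require Import all_classical all_reals all_analysis.
From mathcomp Require Import normal_distribution.
From mathcomp Require Import complex.
Import Order.TTheory GRing.Theory Num.Theory.
Local Open Scope classical_set_scope.
Local Open Scope ring_scope.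
Local Open Scope complex_scope.

(* Transmit with SNR g > 0 in round 1 and with SNR 0 in every later round.
   A silent round changes neither the accumulated SNR nor the combined signal,
   so ERR_(k-1) = ERR_k; both events then have probability p = PER(g), and
   their intersection has probability p, which differs from p^2 as 0 < p < 1. *)

Section SilentRound.
Context {R : realType} {d : measure_display} {T : measurableType d}.
Context {Nb Ns : nat} (ENC : msg Nb -> 'I_Ns -> R[i]).
Context (DEC : ('I_Ns -> R[i]) -> msg Nb) (m : T -> msg Nb).
Context (z : nat -> T -> 'I_Ns -> R[i]) (gamma : nat -> R).

Lemma acc_snrS j : acc_snr gamma j.+1 = acc_snr gamma j + gamma j.+1.
Proof. by rewrite /acc_snr big_nat_recr. Qed.

Lemma mrc_signal_silent_round j : gamma j.+1 = 0 ->
  mrc_signal ENC m z gamma j.+1 = mrc_signal ENC m z gamma j.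
Proof.
move=> silent; apply/funext => t; apply/funext => i.
rewrite /mrc_signal acc_snrS silent addr0 [in LHS]big_nat_recr //=.
by rewrite silent sqrtr0 mul0r addr0.
Qed.

Lemma err_event_silent_round j : gamma j.+1 = 0 ->
  err_event ENC DEC m z gamma j.+1 = err_event ENC DEC m z gamma j.
Proof. by move=> silent; rewrite /err_event mrc_signal_silent_round. Qed.

End SilentRound.

Lemma acc_snr_first_round_only {R : realType} (g : R) j : (0 < j)%N ->
  acc_snr (fun l => if l == 1%N then g else 0) j = g.
Proof.
case: j => // j _; elim: j => [|j IHj]; first by rewrite /acc_snr big_nat1.
by rewrite acc_snrS IHj addr0.
Qed.

Lemma EFin_neq_sqr {R : numDomainType} (p : R) : 0 < p < 1 ->
  (p%:E <> p%:E * p%:E)%E.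
Proof.
case/andP=> p_gt0 p_lt1 /eqP; rewrite -EFinM eqe => /eqP pE.
have : p * (1 - p) = 0 by rewrite mulrBr mulr1 -pE subrr.
by move/eqP; rewrite mulf_eq0 subr_eq0 (gt_eqF p_gt0) (gt_eqF p_lt1).
Qed.

Theorem proposition1 (R : realType) (d : measure_display) (T : measurableType d)
  (P : probability T R) (Nb Ns : nat) (X : set R[i])
  (ENC : msg Nb -> 'I_Ns -> R[i]) (DEC : ('I_Ns -> R[i]) -> msg Nb)
  (m : T -> msg Nb) (z : nat -> T -> 'I_Ns -> R[i]) (PER : R -> R) (k : nat) :
  (2 <= k)%N ->
  (* the codeword ENC[m] lies in X^Ns *)
  (forall (mm : msg Nb) (i : 'I_Ns), X (ENC mm i)) ->
  (* independent zero-mean unit-variance complex Gaussian noise for rounds 1..k *)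
  noise_model P k m z ->
  (* Pr{ERR_j} = PER(gamma_[j]) *)
  (forall (gamma : nat -> R) (j : nat), (1 <= j <= k)%N ->
     (forall l : nat, (1 <= l <= j)%N -> 0 <= gamma l) ->
     0 < acc_snr gamma j ->
     P (err_event ENC DEC m z gamma j) = (PER (acc_snr gamma j))%:E) ->
  (* 0 < PER(gamma) < 1 for some gamma > 0 *)
  (exists g : R, 0 < g /\ 0 < PER g < 1) ->
  exists gamma : nat -> R,
    (forall l : nat, (1 <= l <= k)%N -> 0 <= gamma l) /\
    0 < acc_snr gamma k.-1 /\
    P (err_event ENC DEC m z gamma k.-1 `&` err_event ENC DEC m z gamma k)
      <> (P (err_event ENC DEC m z gamma k.-1) *
          P (err_event ENC DEC m z gamma k))%E.
Proof.
case: k => [|[|k]] // _ _ _ PER_spec [g [g_gt0 PERg01]].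
set gamma := fun l : nat => if l == 1%N then g else 0.
have gamma_ge0 l : 0 <= gamma l by rewrite /gamma; case: ifP => // _; exact: ltW.
have acc_g : acc_snr gamma k.+1 = g by exact: acc_snr_first_round_only.
have silent : gamma k.+2 = 0 by [].
exists gamma; split=> [l _|]; first exact: gamma_ge0.
rewrite /= acc_g; split=> //.
have Perr : P (err_event ENC DEC m z gamma k.+1) = (PER g)%:E.
  by rewrite -acc_g PER_spec ?leqnSn ?acc_g.
rewrite (err_event_silent_round ENC DEC m z _ _ silent) setIid Perr.
exact: EFin_neq_sqr.
Qed.
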